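(* Let $\mathcal A$ be a weakly amenable Banach algebra. Suppose that for each closed two-sided ideal $I$ of $\mathcal A$ at least one of the following holds: (i) the short exact sequence of Banach $\mathcal A$-bimodules $\{0\}\longrightarrow I^\perp\overset{i}{\longrightarrow}\mathcal A^*\overset{\pi}{\longrightarrow}\mathcal A^*/I^\perp\longrightarrow\{0\}$ splits; (ii) the short exact sequence of Banach $\mathcal A$-bimodules $\{0\}\longrightarrow I\overset{i}{\longrightarrow}\mathcal A\overset{\pi}{\longrightarrow}\mathcal A/I\longrightarrow\{0\}$ splits. Then $\mathcal A$ is ideally amenable.
   Context: Here $I^\perp=\{f\in\mathcal A^*: f|_I=0\}$, $i$ denotes inclusion and $\pi$ the quotient map. Duals of Banach $\mathcal A$-bimodules carry the actions $\langle x,a\cdot x^*\rangle=\langle x\cdot a,x^*\rangle$, $\langle x,x^*\cdot a\rangle=\langle a\cdot x,x^*\rangle$. A derivation $D:\mathcal A\to Z$ is a continuous linear map with $D(ab)=a\cdot D(b)+D(a)\cdot b$; it is inner if $D(a)=a\cdot z-z\cdot a$ for some $z\in Z$; $H^1(\mathcal A,Z)=\{0\}$ means every derivation $\mathcal A\to Z$ is inner. $\mathcal A$ is weakly amenable if $H^1(\mathcal A,\mathcal A^* )=\{0\}$, and ideally amenable if $H^1(\mathcal A,I^* )=\{0\}$ for every closed two-sided ideal $I$ of $\mathcal A$. A short exact sequence $\{0\}\to Y\to X\overset{\pi}{\to}X/Y\to\{0\}$ of Banach $\mathcal A$-bimodules splits if $\pi$ has a bounded right inverse which is an $\mathcal A$-bimodule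 homomorphism. *)

From mathcomp Require Import all_boot all_algebra.
From mathcomp Require Import all_classical all_reals all_analysis.
From mathcomp.real_closed Require Export complex.
Export numFieldNormedType.Exports.

Set Implicit Arguments.
Unset Strict Implicit.
Unset Printing Implicit Defensive.
Import GRing.Theory Num.Theory.
Local Open Scope ring_scope.
Local Open Scope classical_set_scope.

Section Defs.
Variables (R : realType) (A : completeNormedModType R[i]) (mul : A -> A -> A).
Local Notation K := R[i].

Definition banach_algebra : Prop :=
  [/\ (forall a b c, mul a (mul b c) = mul (mul a b) c),
      (forall (k : K) a b c, mul (k *: a + b) c = k *: mul a c + mul b c),
      (forall (k : K) a b c, mul a (k *: b + c) = k *: mul a b + mul a c)
    & (forall a b, `|mul a b| <= `|a| * `|b|)].

Definition closed_ideal (I : set A) : Prop :=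
  [/\ I 0, (forall (k : K) x y, I x -> I y -> I (k *: x + y)),
      closed I,
      (forall a x, I x -> I (mul a x)) & (forall a x, I x -> I (mul x a))].

Definition linear_on (S : set A) (f : A -> K) : Prop :=
  forall (k : K) x y, S x -> S y -> f (k *: x + y) = k * f x + f y.

Definition bounded_by_on (S : set A) (f : A -> K) (M : K) : Prop :=
  forall x, S x -> `|f x| <= M * `|x|.

(* Elements of the dual I^* are represented by functions f : A -> K, of which
   only the restriction to I matters; it must be linear and bounded on I.
   The dual actions are <x, a.f> = <x.a, f>, <x, f.a> = <a.x, f>.
   A derivation D : A -> I^* (continuous linear, Leibniz rule);
   identities between elements of I^* are tested on I. *)
Definition derivation_into_dual (I : set A) (D : A -> A -> K) : Prop :=
  [/\ (forall a, linear_on I (D a)),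
      (forall (k : K) a b x, I x -> D (k *: a + b) x = k * D a x + D b x),
      (exists C : K, forall a x, I x -> `|D a x| <= C * `|a| * `|x|)
    & (forall a b x, I x -> D (mul a b) x = D b (mul x a) + D a (mul b x))].

Definition inner_into_dual (I : set A) (D : A -> A -> K) : Prop :=
  exists f : A -> K,
    [/\ linear_on I f, (exists M : K, bounded_by_on I f M)
      & forall a x, I x -> D a x = f (mul x a) - f (mul a x)].

Definition H1_dual_trivial (I : set A) : Prop :=
  forall D, derivation_into_dual I D -> inner_into_dual I D.

Definition weakly_amenable : Prop := H1_dual_trivial setT.

Definition ideally_amenable : Prop :=
  forall I, closed_ideal I -> H1_dual_trivial I.

Definition in_dual (f : A -> K) : Prop :=
  linear_on setT f /\ exists M : K, bounded_by_on setT f M.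

Definition annihilator (I : set A) (f : A -> K) : Prop :=
  in_dual f /\ forall x, I x -> f x = 0.

(* Splitting of 0 -> I -> A -> A/I -> 0.  A bounded right inverse
   sigma : A/I -> A of the quotient map that is a bimodule homomorphism is
   encoded as s = sigma \o pi : A -> A, i.e. a map constant on cosets of I
   with pi (s x) = pi x, linear, bimodule hom, and bounded for the quotient
   norm ||x + I|| = inf_{y in I} ||x + y||. *)
Definition splits_ideal (I : set A) : Prop :=
  exists s : A -> A,
    [/\ (forall x y, I (x - y) -> s x = s y),
        (forall x, I (s x - x)),
        (forall (k : K) x y, s (k *: x + y) = k *: s x + s y),
        (forall a x, s (mul a x) = mul a (s x) /\ s (mul x a) = mul (s x) a)
      & (exists C : K, forall x y, I y -> `|s x| <= C * `|x + y|)].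

(* Splitting of 0 -> I^perp -> A^* -> A^*/I^perp -> 0, encoded likewise as
   S = sigma \o pi on A^*.  Module actions on A^*: (a.f)(x) = f(x a),
   (f.a)(x) = f(a x).  Boundedness w.r.t. the quotient norm
   ||f + I^perp|| = inf_{g in I^perp} ||f + g||, with ||.|| the dual norm
   (||h|| <= M iff |h x| <= M ||x|| for all x). *)
Definition splits_annihilator (I : set A) : Prop :=
  exists S : (A -> K) -> (A -> K),
    (forall f, in_dual f -> in_dual (S f)) /\
    [/\ (forall f g, in_dual f -> in_dual g -> annihilator I (f \- g) ->
                     S f = S g),
        (forall f, in_dual f -> annihilator I (S f \- f)),
        (forall (k : K) f g, in_dual f -> in_dual g ->
           S (fun x => k * f x + g x) = (fun x => k * S f x + S g x)),
        (forall a f, in_dual f ->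
           S (fun x => f (mul x a)) = (fun x => S f (mul x a)) /\
           S (fun x => f (mul a x)) = (fun x => S f (mul a x)))
      & (exists C : K, forall f g M, in_dual f -> annihilator I g ->
           bounded_by_on setT (f \+ g) M ->
           bounded_by_on setT (S f) (C * M))].

End Defs.

(* Case (ii): if sigma splits A -> A/I, then P = id - sigma pi is a bounded
   bimodule projection of A onto I; for a derivation D : A -> I^*, the map
   a |-> D a o P is a derivation into A^*, inner by weak amenability, and
   restricting its implementing functional to I shows that D is inner.
   Case (i): extend every D a to a functional E a on A by Hahn-Banach, with a
   bound uniform in a, and push it through the splitting S of
   A^* -> A^*/I^perp.  As S only depends on classes modulo I^perp, a |-> S (E a)
   is a derivation into A^*, hence inner; since S f - f lies in I^perp, it
   agrees with D on I.  The complex Hahn-Banach theorem is derived from the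
   real one (proved with Zorn's lemma) by complexification. *)

From HB Require Import structures.
From mathcomp Require Import all_boot all_algebra.
From mathcomp Require Import all_classical all_reals all_analysis.
From mathcomp Require Import lra ring.
From mathcomp.real_closed Require Import complex.
Import numFieldNormedType.Exports.
Import order.Order.TTheory GRing.Theory Num.Theory.

Set Implicit Arguments.
Unset Strict Implicit.
Unset Printing Implicit Defensive.

Local Open Scope ring_scope.
Local Open Scope classical_set_scope.

Section RealHahnBanach.
Variables (R : realType) (V : lmodType R).

Definition subspace (D : set V) :=
  D 0 /\ forall r x y, D x -> D y -> D (r *: x + y).

Definition linear_in (D : set V) (g : V -> R) :=
  forall r x y, D x -> D y -> g (r *: x + y) = r * g x + g y.

Lemma subspaceT : subspace [set: V].
Proof. by []. Qed.

Lemma subspaceZ D r x : subspace D -> D x -> D (r *: x).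
Proof. by move=> [D0 DD] Dx; rewrite -[_ *: x]addr0; apply: DD. Qed.

Lemma subspaceD D x y : subspace D -> D x -> D y -> D (x + y).
Proof. by move=> [_ DD] Dx Dy; rewrite -[x]scale1r; apply: DD. Qed.

Lemma linear_in0 D g : subspace D -> linear_in D g -> g 0 = 0.
Proof.
move=> [D0 _] lg; have := lg 1 0 0 D0 D0; rewrite scale1r addr0 mul1r.
by move=> h; apply: (addrI (g 0)); rewrite addr0 -h.
Qed.

Lemma linear_inZ D g r x : subspace D -> linear_in D g -> D x ->
  g (r *: x) = r * g x.
Proof.
move=> sD lg Dx; have := lg r x 0 Dx (proj1 sD).
by rewrite !addr0 (linear_in0 sD lg) addr0.
Qed.

Lemma linear_inD D g x y : subspace D -> linear_in D g -> D x -> D y ->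
  g (x + y) = g x + g y.
Proof. by move=> _ lg Dx Dy; have := lg 1 x y Dx Dy; rewrite scale1r mul1r. Qed.

Variable p : V -> R.
Hypothesis pD : forall x y, p (x + y) <= p x + p y.
Hypothesis pZ : forall r x, 0 < r -> p (r *: x) = r * p x.

Record partial_map := PartialMap { pdom : set V; pfun : V -> R }.

Definition dominated (e : partial_map) :=
  [/\ subspace (pdom e), linear_in (pdom e) (pfun e)
    & forall x, pdom e x -> pfun e x <= p x].

Definition extends (e1 e2 : partial_map) :=
  pdom e1 `<=` pdom e2 /\ forall x, pdom e1 x -> pfun e2 x = pfun e1 x.

Lemma extends_refl e : extends e e.
Proof. by split. Qed.

Lemma extends_trans e1 e2 e3 : extends e1 e2 -> extends e2 e3 -> extends e1 e3.
Proof.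
move=> [D12 f12] [D23 f23]; split; first exact: subset_trans D23.
by move=> x D1x; rewrite f23 ?f12 //; apply: D12.
Qed.

Section OneDimensionalExtension.
Variables (D : set V) (g : V -> R) (x0 : V).
Hypotheses (sD : subspace D) (lg : linear_in D g) (gp : forall x, D x -> g x <= p x).

Lemma lower_le_upper w w' : D w -> D w' ->
  g w - p (w - x0) <= p (w' + x0) - g w'.
Proof.
move=> Dw Dw'; rewrite lerBrDr addrAC lerBlDr -(linear_inD sD lg) //.
apply: le_trans (gp (subspaceD sD Dw Dw')) _.
have -> : w + w' = (w - x0) + (w' + x0) by rewrite addrACA addNr addr0.
by rewrite addrC; apply: pD.
Qed.

Lemma exists_between_bounds : exists c,
  (forall w, D w -> g w - p (w - x0) <= c) /\
  (forall w, D w -> c <= p (w + x0) - g w).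
Proof.
have D0 := proj1 sD.
pose L := [set g w - p (w - x0) | w in D].
have Lub : ubound L (p (0 + x0) - g 0).
  by move=> _ [w Dw <-]; apply: lower_le_upper.
exists (sup L); split=> [w Dw|w Dw].
  by apply: ub_le_sup; [exists (p (0 + x0) - g 0) | exists w].
apply: ge_sup; first by exists (g 0 - p (0 - x0)), 0.
by move=> _ [w' Dw' <-]; apply: lower_le_upper.
Qed.

Lemma dominated_shift c :
  (forall w, D w -> g w - p (w - x0) <= c) ->
  (forall w, D w -> c <= p (w + x0) - g w) ->
  forall w r, D w -> g w + r * c <= p (w + r *: x0).
Proof.
move=> c_lo c_hi w r Dw.
have [r0|r0|->] := ltgtP r 0; last by rewrite scale0r mul0r !addr0; apply: gp.
- have s0 : 0 < - r by rewrite oppr_gt0.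
  have -> : w + r *: x0 = (- r) *: ((- r)^-1 *: w - x0).
    by rewrite scalerBr scalerA mulfV ?gt_eqF // scale1r scaleNr opprK.
  rewrite pZ //; have := c_lo _ (subspaceZ (- r)^-1 sD Dw).
  rewrite (linear_inZ _ sD lg Dw) -(ler_pM2l s0) mulrBr mulrA mulfV ?gt_eqF //.
  by rewrite mul1r; lra.
- have -> : w + r *: x0 = r *: (r^-1 *: w + x0).
    by rewrite scalerDr scalerA mulfV ?gt_eqF // scale1r.
  rewrite pZ //; have := c_hi _ (subspaceZ r^-1 sD Dw).
  rewrite (linear_inZ _ sD lg Dw) -(ler_pM2l r0) mulrBr mulrA mulfV ?gt_eqF //.
  by rewrite mul1r; lra.
Qed.

Hypothesis Dx0 : ~ D x0.

Lemma decomposition_unique w w' r r' : D w -> D w' ->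
  w + r *: x0 = w' + r' *: x0 -> r = r' /\ w = w'.
Proof.
move=> Dw Dw' E; suff rr : r = r' by split=> //; move: E; rewrite rr => /addIr.
apply/eqP; apply/negPn/negP => nrr; apply: Dx0.
have -> : x0 = (r - r')^-1 *: (w' - w).
  apply: (@scalerI _ _ (r - r')); first by rewrite subr_eq0.
  rewrite scalerA mulfV ?subr_eq0 // scale1r scalerBl.
  by rewrite -(addKr w (r *: x0)) E addrA addrK addrC.
by apply: subspaceZ => //; apply: subspaceD => //; rewrite -scaleN1r; apply: subspaceZ.
Qed.

Lemma extend_by_one_dim :
  exists e, [/\ dominated e, extends (PartialMap D g) e & pdom e x0].
Proof.
have [c [c_lo c_hi]] := exists_between_bounds.
pose D' := [set v | exists w r, D w /\ v = w + r *: x0].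
pose g' v := xget 0 [set y | exists w r, [/\ D w, v = w + r *: x0 & y = g w + r * c]].
have g'E w r : D w -> g' (w + r *: x0) = g w + r * c.
  move=> Dw; rewrite /g'; case: xgetP.
    by move=> y _ [w' [r' [Dw' /(decomposition_unique Dw Dw') [-> ->] ->]]].
  by move=> /(_ (g w + r * c)) []; exists w, r.
have combE k w r w' r' : k *: (w + r *: x0) + (w' + r' *: x0) =
    (k *: w + w') + (k * r + r') *: x0.
  by rewrite scalerDr scalerDl scalerA addrACA.
have sD' : subspace D'.
  split; first by exists 0, 0; rewrite scale0r addr0; split=> //; exact: (proj1 sD).
  move=> k _ _ [w [r [Dw ->]]] [w' [r' [Dw' ->]]].
  by exists (k *: w + w'), (k * r + r'); split; [apply: (proj2 sD)|].
exists (PartialMap D' g'); split => //=.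
- split => //=.
  + move=> k _ _ [w [r [Dw ->]]] [w' [r' [Dw' ->]]].
    rewrite combE !g'E //; last by apply: (proj2 sD).
    by rewrite (lg _ Dw Dw') mulrDl mulrDr mulrA addrACA.
  + by move=> _ [w [r [Dw ->]]]; rewrite g'E //; apply: dominated_shift.
- split => /= w Dw; first by exists w, 0; rewrite scale0r addr0.
  by have := g'E w 0 Dw; rewrite scale0r mul0r !addr0.
- by exists 0, 1; rewrite scale1r add0r; split => //; exact: (proj1 sD).
Qed.

End OneDimensionalExtension.

Lemma chain_upper_bound (C : set partial_map) : C !=set0 ->
  (forall e, C e -> dominated e) ->
  (forall e1 e2, C e1 -> C e2 -> extends e1 e2 \/ extends e2 e1) ->
  exists2 u, dominated u & forall e, C e -> extends e u.
Proof.
move=> [e0 Ce0] Cdom Ctot.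
have common e1 e2 : C e1 -> C e2 ->
    exists e, [/\ C e, pdom e1 `<=` pdom e & pdom e2 `<=` pdom e].
  move=> C1 C2; case: (Ctot _ _ C1 C2) => -[sub _].
    by exists e2; split.
  by exists e1; split.
pose dom := [set x | exists e, C e /\ pdom e x].
pose u x := xget 0 [set y | exists e, [/\ C e, pdom e x & pfun e x = y]].
have uE e x : C e -> pdom e x -> u x = pfun e x.
  move=> Ce Dx; rewrite /u; case: xgetP.
    by move=> y _ [e' [Ce' Dx' <-]]; case: (Ctot _ _ Ce Ce') => -[_ ->].
  by move=> /(_ (pfun e x)) []; exists e.
exists (PartialMap dom u); last by move=> e Ce; split=> [x Dx|x Dx]; [exists e|apply: uE].
split => /=.
- split; first by exists e0; split => //; case: (Cdom e0 Ce0) => -[].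
  move=> r x y [e1 [C1 D1]] [e2 [C2 D2]].
  have [e [Ce s1 s2]] := common _ _ C1 C2.
  by exists e; split => //; case: (Cdom e Ce) => -[_ + _ _]; apply; [apply: s1|apply: s2].
- move=> r x y [e1 [C1 D1]] [e2 [C2 D2]].
  have [e [Ce /(_ x D1) Dx /(_ y D2) Dy]] := common _ _ C1 C2.
  have [[_ sD] lg _] := Cdom e Ce.
  by rewrite !(uE e) //; [apply: lg | apply: sD].
- by move=> x [e [Ce Dx]]; rewrite (uE e) //; case: (Cdom e Ce) => _ _; apply.
Qed.

Theorem real_hahn_banach (W : set V) (f : V -> R) :
  subspace W -> linear_in W f -> (forall x, W x -> f x <= p x) ->
  exists F : V -> R, [/\ linear_in setT F, (forall x, W x -> F x = f x)
                       & forall x, F x <= p x].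
Proof.
move=> sW lf fp; pose e0 := PartialMap W f.
pose T := {e : partial_map | dominated e /\ extends e0 e}.
pose le (s t : T) := `[< extends (sval s) (sval t) >].
have t0 : T by exists e0; split; [by split|exact: extends_refl].
have [|||t tmax] := @ZL_preorder T t0 le.
- by move=> s; apply/asboolP; apply: extends_refl.
- by move=> ? ? ? /asboolP ab /asboolP bc; apply/asboolP; apply: extends_trans ab bc.
- move=> S Stot; have [[s0 Ss0]|S0] := pselect (S !=set0); last first.
    by exists t0 => s Ss; exfalso; apply: S0; exists s.
  have [|||u du uS] := chain_upper_bound (C := sval @` S).
  + by exists (sval s0), s0.
  + by move=> _ [s _ <-]; case: (svalP s).
  + move=> _ _ [s1 S1 <-] [s2 S2 <-].
    by case: (Stot _ _ S1 S2) => /asboolP; [left|right].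
  have e0u : extends e0 u by apply: extends_trans (proj2 (svalP s0)) (uS _ _).
  exists (exist _ u (conj du e0u)) => s Ss; apply/asboolP.
  by apply: uS; exists s.
have [[sD tlin tp] e0t] := svalP t.
have full x : pdom (sval t) x.
  apply: contrapT => ntx.
  have [e' [de' te' De'x]] := extend_by_one_dim sD tlin tp ntx.
  have e0e' := extends_trans e0t te'.
  have /asboolP [e't _] := tmax (exist _ e' (conj de' e0e')) (asboolT te').
  exact: ntx (e't x De'x).
exists (pfun (sval t)); split=> [r x y _ _|x Wx|x].
- exact: tlin (full x) (full y).
- exact: e0t.2.
- exact: tp (full x).
Qed.

End RealHahnBanach.

Arguments subspaceT {R V}.

Section ComplexHahnBanach.
Variables (R : realType) (A : normedModType R[i]).
Local Open Scope complex_scope.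

Definition realified : Type := A.
HB.instance Definition _ := GRing.Zmodule.on realified.

Definition real_scale (r : R) (x : realified) : realified := r%:C *: (x : A).

Lemma real_scaleA a b v : real_scale a (real_scale b v) = real_scale (a * b) v.
Proof. by rewrite /real_scale scalerA rmorphM. Qed.

Lemma real_scale1 : left_id 1 real_scale.
Proof. by move=> v; rewrite /real_scale rmorph1 scale1r. Qed.

Lemma real_scaleDr : right_distributive real_scale +%R.
Proof. by move=> a u v; rewrite /real_scale scalerDr. Qed.

Lemma real_scaleDl v : {morph real_scale^~ v : a b / a + b}.
Proof. by move=> a b; rewrite /real_scale rmorphD scalerDl. Qed.

HB.instance Definition _ := GRing.Zmodule_isLmodule.Build R realified
  real_scaleA real_scale1 real_scaleDr real_scaleDl.

Definition normR (x : A) : R := complex.Re `|x|.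

Lemma normRE x : `|x| = (normR x)%:C.
Proof. by rewrite /normR RRe_real // normr_real. Qed.

Lemma normRD x y : normR (x + y) <= normR x + normR y.
Proof. by have := ler_normD x y; rewrite !normRE -rmorphD lecR. Qed.

Lemma normRZ r x : 0 <= r -> normR (r%:C *: x) = r * normR x.
Proof.
move=> r0; apply: complexI.
by rewrite -normRE normrZ ger0_norm ?ler0c // normRE rmorphM.
Qed.

Let real_complexD (a b : R) : (a + b)%:C = a%:C + b%:C :> R[i].
Proof. exact: rmorphD. Qed.

Let real_complexN (a : R) : (- a)%:C = - a%:C :> R[i].
Proof. exact: rmorphN. Qed.

Let real_complexM (a b : R) : (a * b)%:C = a%:C * b%:C :> R[i].
Proof. exact: rmorphM. Qed.

Section Complexification.
Variable F0 : realified -> R.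
Hypothesis F0lin : linear_in setT F0.

Let F0D x y : F0 (x + y) = F0 x + F0 y.
Proof. exact: linear_inD subspaceT F0lin Logic.I Logic.I. Qed.

Let F0Z r (x : A) : F0 (r%:C *: x) = r * F0 x.
Proof. exact (linear_inZ r subspaceT F0lin (x := x : realified) Logic.I). Qed.

Let F0N (x : A) : F0 (- x) = - F0 x.
Proof. by have := F0Z (-1) x; rewrite rmorphN1 scaleN1r mulN1r. Qed.

(* The complex-linear functional with real part F0. *)
Definition complexify (x : A) : R[i] := (F0 x)%:C - 'i%C * (F0 ('i%C *: x))%:C.

Lemma complexifyD x y : complexify (x + y) = complexify x + complexify y.
Proof. by rewrite /complexify scalerDr !F0D !real_complexD; ring. Qed.

Lemma complexifyZ k x : complexify (k *: x) = k * complexify x.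
Proof.
have FZr r y : complexify (r%:C *: y) = r%:C * complexify y.
  by rewrite /complexify scalerA [_ * r%:C]mulrC -scalerA !F0Z !real_complexM; ring.
have Fi y : complexify ('i%C *: y) = 'i%C * complexify y.
  rewrite /complexify scalerA -expr2 sqr_i scaleN1r F0N real_complexN.
  by rewrite mulrBr mulrA -expr2 sqr_i; ring.
rewrite [k]complexE scalerDl -scalerA complexifyD FZr Fi FZr; ring.
Qed.

Lemma Re_complexify x : complex.Re (complexify x) = F0 x.
Proof. by rewrite /complexify; simpc. Qed.

Lemma norm_complexify_le M : 0 <= M -> (forall x, F0 x <= M * normR x) ->
  forall x, `|complexify x| <= M%:C * `|x|.
Proof.
move=> M0 F0M x; set z := complexify x.
have [->|z0] := eqVneq z 0; first by rewrite normr0 mulr_ge0 ?ler0c.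
have nz : `|z| != 0 by rewrite normr_eq0.
pose u := conjc z / `|z|.
have Fux : complexify (u *: x) = `|z|.
  (* u rotates the value at x onto the positive real axis *)
  rewrite complexifyZ -/z /u mulrAC [conjc z * z]mulrC -sqr_normc expr2.
  by rewrite -mulrA divff // mulr1.
have normux : normR (u *: x) = normR x.
  apply: complexI; rewrite -!normRE normrZ /u normrM normfV normr_id normcJ.
  by rewrite divff // mul1r.
have : complex.Re `|z| <= M * normR x.
  by rewrite -Fux Re_complexify -normux; apply: F0M.
by rewrite -lecR real_complexM -normRE RRe_real ?normr_real.
Qed.

Lemma complexify_eq (f : A -> R[i]) x :
  F0 x = complex.Re (f x) -> F0 ('i%C *: x) = complex.Re ('i%C * f x) ->
  complexify x = f x.
Proof.
move=> F0x F0ix; rewrite /complexify F0x F0ix [_ * f x]mulrC ReiNIm real_complexN.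
by rewrite mulrN opprK -complexE.
Qed.

End Complexification.

Theorem complex_hahn_banach (I : set A) (f : A -> R[i]) (M : R[i]) :
  0 <= M -> I 0 -> (forall k x y, I x -> I y -> I (k *: x + y)) ->
  (forall k x y, I x -> I y -> f (k *: x + y) = k * f x + f y) ->
  (forall x, I x -> `|f x| <= M * `|x|) ->
  exists F : A -> R[i], [/\ forall k x y, F (k *: x + y) = k * F x + F y,
    forall x, I x -> F x = f x & forall x, `|F x| <= M * `|x|].
Proof.
move=> M0 I0 Ilin flin fM.
have MRe : M = (complex.Re M)%:C by rewrite RRe_real // ger0_real.
move: M0 fM; rewrite MRe lecR; set m := complex.Re M => m0 fM.
have [|||||F0 [F0lin F0f F0M]] := real_hahn_banach (p := fun x : realified => m * normR x)
    _ _ (W := I) (f := fun x => complex.Re (f x)).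
- by move=> x y; rewrite -mulrDr ler_wpM2l // normRD.
- by move=> r x r0; rewrite /= normRZ ?ltW // mulrCA.
- by split => // r x y Ix Iy; apply: Ilin.
- by move=> r x y Ix Iy; rewrite /= flin //; case: (f x) (f y) => a b [c d] /=; simpc.
- move=> x Ix; apply: le_trans (ler_norm _) _.
  rewrite -lecR; apply: le_trans (normc_ge_Re _) _.
  by rewrite real_complexM -normRE; apply: fM.
exists (complexify F0); split.
- by move=> k x y; rewrite (complexifyD F0lin) (complexifyZ F0lin).
- move=> x Ix; have Iix : I ('i%C *: x) by rewrite -[_ *: x]addr0; apply: Ilin.
  have f0 : f 0 = 0.
    have := flin 1 0 0 I0 I0; rewrite scale1r addr0 mul1r => f00.
    by apply: (addrI (f 0)); rewrite addr0 -f00.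
  have fi : f ('i%C *: x) = 'i%C * f x by rewrite -[_ *: x]addr0 flin // f0 addr0.
  by apply: complexify_eq; rewrite !F0f // fi.
- by move=> x; apply: (norm_complexify_le F0lin m0) => y; apply: F0M.
Qed.
End ComplexHahnBanach.

Lemma le_norm_bound (K : numDomainType) (V : normedZmodType K) (z : V) (c : K) :
  `|z| <= c -> `|z| <= `|c|.
Proof. by move=> zc; rewrite ger0_norm // (le_trans (normr_ge0 z) zc). Qed.

Section BanachAlgebra.
Variables (R : realType) (A : completeNormedModType R[i]) (mul : A -> A -> A).
Local Notation K := R[i].

Lemma bounded_by_on_norm (S : set A) (f : A -> K) M :
  bounded_by_on S f M -> bounded_by_on S f `|M|.
Proof.
by move=> fM x Sx; have := le_norm_bound (fM x Sx); rewrite normrM normr_id.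
Qed.

Lemma in_dual_comb (k : K) (f g : A -> K) : in_dual f -> in_dual g ->
  in_dual (fun x => k * f x + g x).
Proof.
move=> [lf [Mf bf]] [lg [Mg bg]]; split.
  by move=> c x y _ _; rewrite lf // lg //; ring.
exists (`|k| * Mf + Mg) => x _.
apply: le_trans (ler_normD _ _) _; rewrite normrM mulrDl -mulrA.
by apply: lerD; [apply: ler_wpM2l => //; apply: bf | apply: bg].
Qed.

Lemma in_dualB (f g : A -> K) : in_dual f -> in_dual g -> in_dual (f \- g).
Proof.
move=> df dg; have := in_dual_comb (-1) dg df.
by congr in_dual; apply: funext => x /=; rewrite mulN1r addrC.
Qed.

Lemma in_dual0 : in_dual (fun _ : A => 0 : K).
Proof.
split; first by move=> c x y _ _; rewrite mulr0 addr0.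
by exists 0 => x _; rewrite normr0 mul0r.
Qed.

Hypothesis BA : banach_algebra mul.

Lemma mulBl a b c : mul (a - b) c = mul a c - mul b c.
Proof. by case: BA => _ mulZDl _ _; rewrite -scaleN1r addrC mulZDl scaleN1r addrC. Qed.

Lemma mulBr a b c : mul a (b - c) = mul a b - mul a c.
Proof. by case: BA => _ _ mulZDr _; rewrite -scaleN1r addrC mulZDr scaleN1r addrC. Qed.

Lemma in_dual_mulr a (f : A -> K) : in_dual f -> in_dual (fun x => f (mul x a)).
Proof.
case: BA => _ mulZDl _ mul_le [lf [Mf /bounded_by_on_norm bf]]; split.
  by move=> c x y _ _; rewrite mulZDl lf.
exists (`|Mf| * `|a|) => x _; apply: le_trans (bf _ I) _.
by rewrite -mulrA [`|a| * _]mulrC; apply: ler_wpM2l => //; apply: mul_le.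
Qed.

Lemma in_dual_mull a (f : A -> K) : in_dual f -> in_dual (fun x => f (mul a x)).
Proof.
case: BA => _ _ mulZDr mul_le [lf [Mf /bounded_by_on_norm bf]]; split.
  by move=> c x y _ _; rewrite mulZDr lf.
exists (`|Mf| * `|a|) => x _; apply: le_trans (bf _ I) _.
by rewrite -mulrA; apply: ler_wpM2l => //; apply: mul_le.
Qed.

Definition bimodule_projection (I : set A) (P : A -> A) :=
  [/\ forall x, I (P x), forall x, I x -> P x = x,
      forall (k : K) x y, P (k *: x + y) = k *: P x + P y,
      forall a x, P (mul a x) = mul a (P x) /\ P (mul x a) = mul (P x) a
    & exists C : K, forall x, `|P x| <= C * `|x|].

Lemma bimodule_projection_of_splits_ideal I : closed_ideal mul I ->
  splits_ideal mul I -> exists P, bimodule_projection I P.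
Proof.
move=> [I0 Ilin _ _ _] [s [s_coset sx_x slin smod [Cs sbd]]].
have IN x : I x -> I (- x).
  by move=> Ix; rewrite -scaleN1r -[_ *: x]addr0; apply: Ilin.
have sI x : I x -> s x = s 0 by move=> Ix; apply: s_coset; rewrite subr0.
have s0 : s 0 = 0.
  have := slin 1 0 0; rewrite !scale1r addr0 => s00.
  by apply: (addrI (s 0)); rewrite addr0 -s00.
exists (fun x => x - s x); split.
- by move=> x; rewrite -opprB; apply/IN/sx_x.
- by move=> x Ix; rewrite sI // s0 subr0.
- by move=> k x y; rewrite slin scalerBr opprD addrACA.
- by move=> a x; rewrite (smod a x).1 (smod a x).2 mulBl mulBr.
- exists (1 + `|Cs|) => x; rewrite mulrDl mul1r.
  apply: le_trans (ler_normB _ _) _; apply: lerD => //.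
  by have := le_norm_bound (sbd x 0 I0); rewrite addr0 normrM normr_id.
Qed.

Lemma H1_dual_trivial_of_projection I P : bimodule_projection I P ->
  weakly_amenable mul -> H1_dual_trivial mul I.
Proof.
move=> [PI Pid Plin Pmod [CP PC]] wa D [Dl Dlin [C DC] Dmul].
have [f [fl [M fM] fD]] : inner_into_dual mul setT (fun a x => D a (P x)).
  apply: wa; split.
  - by move=> a k x y _ _; rewrite Plin Dl.
  - by move=> k a b x _; rewrite Dlin.
  - exists (`|C| * `|CP|) => a x _.
    have := le_norm_bound (DC a (P x) (PI x)); rewrite !normrM !normr_id => DPx.
    apply: le_trans DPx _; rewrite -!mulrA; apply: ler_wpM2l => //.
    rewrite mulrCA; apply: ler_wpM2l => //.
    by have := le_norm_bound (PC x); rewrite normrM normr_id.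
  - by move=> a b x _; rewrite Dmul // (Pmod a x).2 (Pmod b x).1.
exists f; split=> [k x y _ _||a x Ix]; first exact: fl.
  by exists M => x _; apply: fM.
by rewrite -fD // Pid.
Qed.

Lemma derivation_extends_to_dual I D : closed_ideal mul I ->
  derivation_into_dual mul I D ->
  exists E : A -> A -> K, [/\ forall a, in_dual (E a),
    forall a x, I x -> E a x = D a x
    & exists C : K, forall a, bounded_by_on setT (E a) (C * `|a|)].
Proof.
move=> [I0 Ilin _ _ _] [Dl _ [C DC] _].
have ext a : exists F : A -> K, [/\ forall k x y, F (k *: x + y) = k * F x + F y,
    forall x, I x -> F x = D a x & forall x, `|F x| <= `|C| * `|a| * `|x|].
  apply: complex_hahn_banach => //.
    by move=> k x y Ix Iy; apply: Dl.
  by move=> x Ix; have := le_norm_bound (DC a x Ix); rewrite !normrM !normr_id.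
have [E hE] := choice ext.
exists E; split=> [a|a x Ix|].
- case: (hE a) => Elin _ EM; split; first by move=> k x y _ _; apply: Elin.
  by exists (`|C| * `|a|) => x _; apply: EM.
- by case: (hE a) => _ ->.
- by exists `|C| => a x _; case: (hE a) => _ _; apply.
Qed.

Lemma H1_dual_trivial_of_splits_annihilator I : closed_ideal mul I ->
  weakly_amenable mul -> splits_annihilator mul I -> H1_dual_trivial mul I.
Proof.
move=> cI wa [S [Sdual [Sco Sann Slin Smod [CS SC]]]] D dD.
have [E [Edual ED [CE CEb]]] := derivation_extends_to_dual cI dD.
have [_ _ _ Il Ir] := cI; have [_ Dlin _ Dmul] := dD.
have Scong f g : in_dual f -> in_dual g -> (forall x, I x -> f x = g x) ->
    S f = S g.
  move=> df dg fg; apply: Sco => //; split; first exact: in_dualB.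
  by move=> x Ix /=; rewrite fg // subrr.
have [phi [phil [M phiM] phiD]] : inner_into_dual mul setT (fun a => S (E a)).
  apply: wa; split.
  - by move=> a; case: (Sdual _ (Edual a)).
  - move=> k a b x _.
    rewrite (Scong _ _ (Edual _) (in_dual_comb k (Edual a) (Edual b))).
      by rewrite Slin.
    by move=> y Iy; rewrite !ED // Dlin.
  - exists (CS * CE) => a x _.
    have Ea0 : bounded_by_on setT (E a \+ (fun=> 0)) (CE * `|a|).
      by move=> y _ /=; rewrite addr0; apply: CEb.
    have ann0 : annihilator I (fun=> 0) by split; [exact: in_dual0|].
    by have := SC _ _ _ (Edual a) ann0 Ea0 x Logic.I; rewrite !mulrA.
  - move=> a b x _.
    have Ebr := in_dual_mulr a (Edual b); have Eal := in_dual_mull b (Edual a).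
    rewrite (Scong (E (mul a b)) _ (Edual _) (in_dual_comb 1 Ebr Eal)); last first.
      by move=> y Iy; rewrite mul1r !ED ?Dmul //; [apply: Il|apply: Ir].
    by rewrite Slin //= (Smod a _ (Edual b)).1 (Smod b _ (Edual a)).2 mul1r.
exists phi; split=> [k x y _ _||a x Ix]; first exact: phil.
  by exists M => x _; apply: phiM.
rewrite -phiD // -ED //; apply/esym/eqP; rewrite -subr_eq0; apply/eqP.
exact: (Sann _ (Edual a)).2.
Qed.
End BanachAlgebra.

Theorem theorem3p1 (R : realType) (A : completeNormedModType R[i])
  (mul : A -> A -> A) :
  banach_algebra mul ->
  weakly_amenable mul ->
  (forall I : set A, closed_ideal mul I ->
     splits_annihilator mul I \/ splits_ideal mul I) ->
  ideally_amenable mul.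
Proof.
move=> BA wa splits I cI; case: (splits I cI) => [split_dual|split_ideal].
  exact: H1_dual_trivial_of_splits_annihilator.
have [P projP] := bimodule_projection_of_splits_ideal BA cI split_ideal.
exact: H1_dual_trivial_of_projection projP wa.
Qed.
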